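(* Let $A=[a_{ij}]_{i,j=1}^n\in\mathcal{M}_n(\mathbb{H})$ be an upper triangular nilpotent matrix whose associated graph $\mathcal{G}_A$ is a tree, and let $\beta=(\beta_1,\dots,\beta_n)\in\mathbb{S}^+_{\mathbb{R}^n}$. Then $$\bigcup_{z_1,\dots,z_n\in\mathbb{S}_{\mathbb{H}}}\Big\{\sum_{i,j=1}^n\beta_i\beta_j z_i^*a_{ij}z_j\Big\}=\sum_{i,j=1}^n\mathbb{S}_{\mathbb{H}}(0,\beta_i\beta_j|a_{ij}|),$$ where the right-hand side is a Minkowski (elementwise) sum of sets.
   Context: $\mathbb{H}$ denotes the real quaternions, $q^*$ the conjugate and $|q|^2=qq^*$. $\mathbb{S}_{\mathbb{H}}=\{z\in\mathbb{H}:|z|=1\}$; for $r\ge0$, $\mathbb{S}_{\mathbb{H}}(0,r)=\{q\in\mathbb{H}:|q|=r\}$ (so $\mathbb{S}_{\mathbb{H}}(0,0)=\{0\}$). $\mathbb{S}^+_{\mathbb{R}^n}=\{\beta\in\mathbb{R}^n:\|\beta\|=1,\ \beta_i\ge0\ \forall i\}$. For $A=[a_{ij}]\in\mathcal{M}_n(\mathbb{H})$, the graph $\mathcal{G}_A$ is the undirected graph on vertices $\{1,\dots,n\}$ with an edge between $i$ and $j$ (a loop if $i=j$) whenever $a_{ij}\neq0$ or $a_{ji}\neq0$. A cycle is a path from a vertex to itself (loops count as cycles); $A$ is cycle-free if $\mathcal{G}_A$ has no cycles, and $A$ is a tree (matrix) if $\mathcal{G}_A$ is connected and cycle-free. An upper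 triangular nilpotent quaternionic matrix has zero diagonal. *)

(* Quaternions over an arbitrary real closed field R
   (the paper's case is R = the reals). *)
From HB Require Import structures.
From mathcomp Require Import all_boot all_order all_algebra.
Set Implicit Arguments. Unset Strict Implicit. Unset Printing Implicit Defensive.
Import Order.TTheory GRing.Theory Num.Theory.
Local Open Scope ring_scope.

(* A quaternion a + b i + c j + d k is the tuple (((a, b), c), d);
   the product type inherits eqType and the (componentwise) zmodType
   structure, i.e. quaternion addition, 0, and \sum. *)
Definition quat (R : rcfType) : Type := (R * R * R * R)%type.

Section Quat.
Variable R : rcfType.

Definition qmk (a b c d : R) : quat R := (a, b, c, d).
Definition qre (q : quat R) : R := q.1.1.1.
Definition qi  (q : quat R) : R := q.1.1.2.
Definition qj  (q : quat R) : R := q.1.2.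
Definition qk  (q : quat R) : R := q.2.

Definition qreal (r : R) : quat R := qmk r 0 0 0.

Definition qmul (p q : quat R) : quat R :=
  qmk (qre p * qre q - qi p * qi q - qj p * qj q - qk p * qk q)
      (qre p * qi q + qi p * qre q + qj p * qk q - qk p * qj q)
      (qre p * qj q - qi p * qk q + qj p * qre q + qk p * qi q)
      (qre p * qk q + qi p * qj q - qj p * qi q + qk p * qre q).

Definition qconj (q : quat R) : quat R := qmk (qre q) (- qi q) (- qj q) (- qk q).

(* |q| = sqrt (q times conj q) ; q times conj q is the real a^2+b^2+c^2+d^2 *)
Definition qnorm (q : quat R) : R :=
  Num.sqrt (qre q ^+ 2 + qi q ^+ 2 + qj q ^+ 2 + qk q ^+ 2).

Definition qmx (n : nat) := 'I_n -> 'I_n -> quat R.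

Definition qmx1 (n : nat) : qmx n := fun i j => if i == j then qreal 1 else 0.
Definition qmxmul (n : nat) (A B : qmx n) : qmx n :=
  fun i j => \sum_(k < n) qmul (A i k) (B k j).
Fixpoint qmxpow (n : nat) (A : qmx n) (k : nat) : qmx n :=
  match k with 0 => @qmx1 n | k'.+1 => qmxmul (qmxpow A k') A end.

Definition qmx_upper_triangular (n : nat) (A : qmx n) : Prop :=
  forall i j : 'I_n, (j < i)%N -> A i j = 0.
Definition qmx_nilpotent (n : nat) (A : qmx n) : Prop :=
  exists k : nat, forall i j, qmxpow A k i j = 0.

(* the graph G_A: edge (or loop if i = j) iff a_ij <> 0 or a_ji <> 0 *)
Definition qgraph (n : nat) (A : qmx n) : rel 'I_n :=
  fun i j => (A i j != 0) || (A j i != 0).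

End Quat.

(* Undirected graphs given by a symmetric relation e on a finite vertex set. *)
Definition graph_connected (T : finType) (e : rel T) : Prop :=
  forall x y : T, connect e x y.

(* A cycle: a loop, or a closed walk x -> p_1 -> ... -> p_k -> x with
   x, p_1, ..., p_k pairwise distinct and k >= 2 (i.e. length >= 3). *)
Definition graph_cycle_free (T : finType) (e : rel T) : Prop :=
  (forall x : T, ~~ e x x) /\
  (forall (x : T) (p : seq T), uniq (x :: p) -> (2 <= size p)%N -> ~~ cycle e (x :: p)).

Definition graph_tree (T : finType) (e : rel T) : Prop :=
  graph_connected e /\ graph_cycle_free e.

(* Lemma 3.4: for an upper triangular quaternionic matrix A whose graph G_A is
   a tree and weights beta_i >= 0, the values of
       sum_(i,j) beta_i beta_j z_i^* a_ij z_j      (|z_i| = 1)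
   are exactly the sums sum_(i,j) p_ij with |p_ij| = beta_i beta_j |a_ij|.

   One inclusion is the multiplicativity of the quaternion norm.  For the
   other, write p_ij = beta_i beta_j t_ij with |t_ij| = |a_ij|; it suffices to
   find unit quaternions z_i with z_i^* a_ij z_j = t_ij for all i, j.
   Since A is upper triangular, an edge {i, j} (i < j) of G_A carries exactly
   one such equation, and it can be solved for the unit at either endpoint
   once the other endpoint is fixed.  Because G_A is a tree, such locally
   solvable edge constraints can be satisfied globally by labelling the
   vertices one at a time along a growing connected subtree. *)
From HB Require Import structures.
From mathcomp Require Import all_boot all_order all_algebra.
From mathcomp Require Import ring lra zify.
Import Order.TTheory GRing.Theory Num.Theory.
Local Open Scope ring_scope.

Section QuaternionAlgebra.
Context {R : rcfType}.
Implicit Types (p q x y a t : quat R) (c r s : R).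

Lemma quatP p q :
  qre p = qre q -> qi p = qi q -> qj p = qj q -> qk p = qk q -> p = q.
Proof.
case: p => [[[a b] c] d]; case: q => [[[a' b'] c'] d'].
by rewrite /qre /qi /qj /qk /= => -> -> -> ->.
Qed.

Local Ltac quat_ring :=
  apply: quatP; rewrite /qmul /qconj /qreal /qmk /qre /qi /qj /qk /=; ring.

Lemma qmulA p q x : qmul p (qmul q x) = qmul (qmul p q) x.
Proof. quat_ring. Qed.

Lemma qmul0r q : qmul 0 q = 0. Proof. quat_ring. Qed.
Lemma qmulr0 q : qmul q 0 = 0. Proof. quat_ring. Qed.
Lemma qmul1r q : qmul (qreal 1) q = q. Proof. quat_ring. Qed.

Lemma qmul_real r s : qmul (qreal r) (qreal s) = qreal (r * s).
Proof. quat_ring. Qed.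

Lemma qreal_comm r q : qmul (qreal r) q = qmul q (qreal r).
Proof. quat_ring. Qed.

Lemma qconjK q : qconj (qconj q) = q. Proof. quat_ring. Qed.

Lemma qconj_mul p q : qconj (qmul p q) = qmul (qconj q) (qconj p).
Proof. quat_ring. Qed.

Definition qnorm2 q : R := qre q ^+ 2 + qi q ^+ 2 + qj q ^+ 2 + qk q ^+ 2.

Lemma qmul_conjl q : qmul (qconj q) q = qreal (qnorm2 q).
Proof. rewrite /qnorm2; quat_ring. Qed.
Lemma qmul_conjr q : qmul q (qconj q) = qreal (qnorm2 q).
Proof. rewrite /qnorm2; quat_ring. Qed.

Lemma qnorm2_mul p q : qnorm2 (qmul p q) = qnorm2 p * qnorm2 q.
Proof. rewrite /qnorm2 /qmul /qmk /qre /qi /qj /qk /=; ring. Qed.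

Lemma qnorm2_ge0 q : 0 <= qnorm2 q.
Proof. by rewrite /qnorm2 !addr_ge0 ?sqr_ge0. Qed.

Lemma qnorm2E q : qnorm2 q = qnorm q ^+ 2.
Proof. by rewrite /qnorm sqr_sqrtr // qnorm2_ge0. Qed.

Lemma qnorm_mul p q : qnorm (qmul p q) = qnorm p * qnorm q.
Proof. by rewrite /qnorm -/(qnorm2 _) qnorm2_mul sqrtrM // qnorm2_ge0. Qed.

Lemma qnorm_conj q : qnorm (qconj q) = qnorm q.
Proof. by rewrite /qnorm /qconj /qmk /qre /qi /qj /qk /= !sqrrN. Qed.

Lemma qnorm_real r : qnorm (qreal r) = `|r|.
Proof.
by rewrite /qnorm /qreal /qmk /qre /qi /qj /qk /= expr0n /= !addr0 sqrtr_sqr.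
Qed.

Lemma qnorm0 : qnorm (0 : quat R) = 0.
Proof. by rewrite -[0 : quat R]/(qreal 0) qnorm_real normr0. Qed.

Lemma qnorm_eq0 q : qnorm q = 0 -> q = 0.
Proof.
rewrite /qnorm => /eqP; rewrite sqrtr_eq0.
case: q => [[[a b] c] d]; rewrite /qre /qi /qj /qk /= => sum_sq_le0.
have ha : a = 0 by nra.
have hb : b = 0 by nra.
have hc : c = 0 by nra.
have hd : d = 0 by nra.
by rewrite ha hb hc hd.
Qed.

Lemma qnorm2_neq0 a : a != 0 -> qnorm2 a != 0.
Proof.
move=> a0; apply/eqP=> h; move/eqP: a0; apply; apply: qnorm_eq0.
by rewrite /qnorm -/(qnorm2 a) h sqrtr0.
Qed.

Definition qinv a : quat R := qmul (qreal (qnorm2 a)^-1) (qconj a).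

Lemma qmulV a : a != 0 -> qmul a (qinv a) = qreal 1.
Proof.
by move=> /qnorm2_neq0 a0; rewrite /qinv qreal_comm qmulA qmul_conjr qmul_real mulfV.
Qed.

Lemma qnorm_inv a : qnorm a != 0 -> qnorm (qinv a) = (qnorm a)^-1.
Proof.
move=> na0.
rewrite /qinv qnorm_mul qnorm_real qnorm_conj qnorm2E ger0_norm ?invr_ge0 ?sqr_ge0 //.
by rewrite expr2 invfM divfK.
Qed.

Lemma qunit_conjl x : qnorm x = 1 -> qmul (qconj x) x = qreal 1.
Proof. by move=> hx; rewrite qmul_conjl qnorm2E hx expr1n. Qed.

(* Edge equation, solved for the right unit: given a unit x and t with
   |t| = |a|, some unit y satisfies x^* a y = t (take y = a^-1 x t). *)
Lemma solve_right {a t x} : qnorm t = qnorm a -> qnorm x = 1 ->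
  exists2 y, qnorm y = 1 & qmul (qmul (qconj x) a) y = t.
Proof.
move=> ht hx; have [a0|a0] := eqVneq a 0.
  exists x => //; rewrite a0 qmulr0 qmul0r; apply/esym/qnorm_eq0.
  by rewrite ht a0 qnorm0.
have na0 : qnorm a != 0 by apply: contra a0 => /eqP /qnorm_eq0 ->.
exists (qmul (qinv a) (qmul x t)).
  by rewrite 2!qnorm_mul qnorm_inv // hx ht mul1r mulVf.
by rewrite -qmulA [qmul a _]qmulA qmulV // qmul1r qmulA qunit_conjl // qmul1r.
Qed.

(* Edge equation, solved for the left unit; obtained from solve_right by
   conjugating the equation. *)
Lemma solve_left {a t x} : qnorm t = qnorm a -> qnorm x = 1 ->
  exists2 y, qnorm y = 1 & qmul (qmul (qconj y) a) x = t.
Proof.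
move=> ht hx.
have [|y hy eq_y] := @solve_right (qconj a) (qconj t) x _ hx.
  by rewrite !qnorm_conj.
by exists y => //; rewrite -[t]qconjK -eq_y !qconj_mul !qconjK qmulA.
Qed.

Lemma qnorm_scaled c a p : 0 <= c -> qnorm p = c * qnorm a ->
  exists2 t, qnorm t = qnorm a & p = qmul (qreal c) t.
Proof.
move=> c_ge0 hp; have [c0|c0] := eqVneq c 0.
  exists a => //; rewrite c0 -[qreal 0]/(0 : quat R) qmul0r.
  by apply: qnorm_eq0; rewrite hp c0 mul0r.
exists (qmul (qreal c^-1) p).
  by rewrite qnorm_mul qnorm_real hp normfV ger0_norm // mulKf.
by rewrite qmulA qmul_real mulfV // qmul1r.
Qed.

End QuaternionAlgebra.

Section TreeLabelling.
Variables (T : finType) (e : rel T).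
Hypotheses (e_sym : symmetric e) (e_conn : graph_connected e)
           (e_acyclic : graph_cycle_free e).

Definition induced (S : {set T}) : rel T := [rel a b | [&& a \in S, b \in S & e a b]].

Definition connected_in (S : {set T}) : Prop :=
  forall x y, x \in S -> y \in S -> connect (induced S) x y.

Lemma path_induced_in {S x p} : path (induced S) x p -> {subset p <= S}.
Proof.
elim: p x => [|a p IH] x //= /andP[/and3P[_ aS _] hp] y.
by rewrite in_cons => /orP[/eqP->|/(IH _ hp)].
Qed.

Lemma exit_edge {S : {set T}} {s v} : s \in S -> v \notin S ->
  exists u w, [/\ u \in S, w \notin S & e u w].
Proof.
have /connectP[p hp ->] := e_conn s v.
elim: p s hp => [|a p IH] x /= ; first by move=> _ ->.
move=> /andP[exa hp] xS; have [aS|aS] := boolP (a \in S); first exact: IH.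
by move=> _; exists x, a.
Qed.

(* Acyclicity: a vertex outside a connected set S has at most one neighbour
   in S, since two neighbours would close a cycle through S. *)
Lemma unique_attachment {S : {set T}} {u y v} : connected_in S ->
  u \in S -> y \in S -> v \notin S -> e u v -> e y v -> y = u.
Proof.
move=> S_conn uS yS vS euv eyv; apply/eqP/negPn/negP => yu.
have /connectP[p0 hp0 ly] := S_conn u y uS yS.
case: (shortenP hp0) ly => p hp up _ ly.
have pS := path_induced_in hp.
have p_uniq : uniq (v :: u :: p).
  rewrite cons_uniq up andbT in_cons negb_or; apply/andP; split.
    by apply: contra vS => /eqP ->.
  by apply: contra vS; apply: pS.
have p_long : (1 < size (u :: p))%N.
  by case: p {hp up pS p_uniq} ly => //= ly; rewrite -ly eqxx in yu.
move/negP: (e_acyclic.2 v (u :: p) p_uniq p_long); apply.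
rewrite /cycle /= -cats1 cat_path -ly e_sym euv /= eyv !andbT.
by apply: sub_path hp => a b /and3P[].
Qed.

Lemma connected_in_add {S : {set T}} {u v} : connected_in S -> u \in S -> e u v ->
  connected_in (v |: S).
Proof.
move=> S_conn uS euv.
have sub x y : x \in S -> y \in S -> connect (induced (v |: S)) x y.
  move=> xS yS; apply: connect_sub (S_conn x y xS yS) => a c /and3P[aS cS eac].
  by apply: connect1; rewrite /induced /= !inE aS cS eac !orbT.
have uv : connect (induced (v |: S)) u v
  by apply: connect1; rewrite /induced /= !inE uS eqxx orbT.
have vu : connect (induced (v |: S)) v u
  by apply: connect1; rewrite /induced /= !inE uS eqxx orbT e_sym.
move=> x y; rewrite !inE => /orP[/eqP->|xS] /orP[/eqP->|yS].
- exact: connect0.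
- exact: connect_trans vu (sub _ _ uS yS).
- exact: connect_trans (sub _ _ xS uS) uv.
- exact: sub.
Qed.

Variables (V : Type) (Q : V -> Prop) (P : T -> T -> V -> V -> Prop).
Hypotheses (P_sym : forall x y a b, P x y a b -> P y x b a)
           (P_ext : forall x y a, e x y -> Q a -> exists2 b, Q b & P x y a b).

Definition labelling_on (S : {set T}) (z : T -> V) : Prop :=
  (forall x, Q (z x)) /\
  (forall x y, x \in S -> y \in S -> e x y -> P x y (z x) (z y)).

(* A connected set with a valid labelling grows by one vertex: attach an
   outside neighbour v of its unique neighbour u in S and label v from u. *)
Lemma labelling_grow {S : {set T}} {z s v} : connected_in S -> labelling_on S z ->
  s \in S -> v \notin S ->
  exists (S' : {set T}) z', [/\ #|S'| = #|S|.+1, connected_in S' & labelling_on S' z'].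
Proof.
move=> S_conn [Qz Pz] sS vS.
have [u [w [uS wS euw]]] := exit_edge sS vS.
have [b Qb Pb] := P_ext _ _ _ euw (Qz u).
exists (w |: S), (fun x => if x == w then b else z x); split.
- by rewrite cardsU1 wS.
- exact: connected_in_add euw.
have ne_w c : c \in S -> (c == w) = false by move=> cS; apply: contraNF wS => /eqP <-.
split=> [x|x y]; first by case: ifP.
rewrite !inE => /orP[/eqP->|xS] /orP[/eqP->|yS] exy.
- by rewrite (negPf (e_acyclic.1 w)) in exy.
- rewrite e_sym in exy; rewrite (unique_attachment S_conn uS yS wS euw exy).
  by rewrite eqxx ne_w //; apply: P_sym.
- by rewrite (unique_attachment S_conn uS xS wS euw exy) eqxx ne_w.
- by rewrite !ne_w //; apply: Pz.
Qed.

Lemma tree_labelling (v0 : V) : Q v0 ->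
  exists z : T -> V, (forall x, Q (z x)) /\ (forall x y, e x y -> P x y (z x) (z y)).
Proof.
move=> Qv0; have [r _|T0] := pickP T; last first.
  by exists (fun _ => v0); split=> // x; have := T0 x.
have grow k : (k < #|T|)%N -> exists (S : {set T}) z,
    [/\ #|S| = k.+1, connected_in S & labelling_on S z].
  elim: k => [_|k IH lt_k_T].
    exists [set r], (fun _ => v0); split; first exact: cards1.
      by move=> x y; rewrite !inE => /eqP -> /eqP ->; exact: connect0.
    split=> // x y; rewrite !inE => /eqP -> /eqP ->.
    by rewrite (negPf (e_acyclic.1 r)).
  have [S [z [cardS S_conn z_lab]]] := IH (ltnW lt_k_T).
  have [s sS] : exists s, s \in S by apply/card_gt0P; rewrite cardS.
  have [v vS] : exists v, v \notin S.
    have /card_gt0P[v] : (0 < #|~: S|)%N by have := cardsC S; lia.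
    by rewrite inE; exists v.
  by rewrite -cardS; exact: labelling_grow z_lab sS vS.
have T_gt0 : (0 < #|T|)%N by apply/card_gt0P; exists r.
have [S [z [cardS _ [Qz Pz]]]] := grow #|T|.-1 ltac:(by rewrite ltn_predL).
have ST : S = setT by apply/eqP; rewrite eqEcard subsetT cardsT cardS; lia.
by exists z; split=> // x y; apply: Pz; rewrite ST inE.
Qed.
End TreeLabelling.

Section UpperTriangularTree.
Context {R : rcfType} {n : nat} {A : qmx R n}.

Lemma qgraph_sym : symmetric (qgraph A).
Proof. by move=> i j; rewrite /qgraph orbC. Qed.

(* An edge {i, j} with i < j carries the single
   equation z_i^* a_ij z_j = t_ij (a_ji = 0), which can be solved for either
   endpoint (solve_right, solve_left); tree_labelling propagates the solution;
   for non-edges a_ij = 0 = t_ij. *)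
Lemma tree_unit_solution {t : 'I_n -> 'I_n -> quat R} :
  qmx_upper_triangular A -> graph_tree (qgraph A) ->
  (forall i j, qnorm (t i j) = qnorm (A i j)) ->
  exists2 z : 'I_n -> quat R, forall i, qnorm (z i) = 1 &
    forall i j, qmul (qmul (qconj (z i)) (A i j)) (z j) = t i j.
Proof.
move=> upper [conn acyclic] t_norm.
pose C i j a b := qmul (qmul (qconj a) (A i j)) b = t i j.
pose P (i j : 'I_n) a b := ((i < j)%N -> C i j a b) /\ ((j < i)%N -> C j i b a).
have [z [z_unit z_P]] : exists z : 'I_n -> quat R,
    (forall i, qnorm (z i) = 1) /\ (forall i j, qgraph A i j -> P i j (z i) (z j)).
  apply: (@tree_labelling _ (qgraph A) qgraph_sym conn acyclic _
                          (fun a => qnorm a = 1) P _ _ (qreal 1)).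
  - by move=> x y a b [C_xy C_yx]; split.
  - move=> x y a _ a_unit; case: (ltngtP x y) => [xy|yx|/ord_inj->].
    + have [b b_unit C_ab] := solve_right (t_norm x y) a_unit.
      by exists b => //; split=> // /(ltn_trans xy); rewrite ltnn.
    + have [b b_unit C_ba] := solve_left (t_norm y x) a_unit.
      by exists b => //; split=> // /(ltn_trans yx); rewrite ltnn.
    + by exists a => //; split; rewrite ltnn.
  - by rewrite qnorm_real normr1.
exists z => // i j.
have [a0|a0] := eqVneq (A i j) 0.
  by rewrite a0 qmulr0 qmul0r; apply/esym/qnorm_eq0; rewrite t_norm a0 qnorm0.
have edge : qgraph A i j by rewrite /qgraph a0.
case: (z_P i j edge) => + _; case: ltngtP => [ij|ji|/ord_inj eq_ij] C_ij.
- exact: C_ij.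
- by rewrite upper ?eqxx in a0.
- by move: edge; rewrite eq_ij (negPf (acyclic.1 j)).
Qed.
End UpperTriangularTree.

Theorem lemma3p4 (R : rcfType) (n : nat) (A : qmx R n) (beta : 'I_n -> R) :
  qmx_upper_triangular A ->
  qmx_nilpotent A ->
  graph_tree (qgraph A) ->
  Num.sqrt (\sum_(i < n) beta i ^+ 2) = 1 ->
  (forall i, 0 <= beta i) ->
  forall w : quat R,
    (exists z : 'I_n -> quat R,
        (forall i, qnorm (z i) = 1) /\
        w = \sum_(i < n) \sum_(j < n)
              qmul (qreal (beta i * beta j)) (qmul (qmul (qconj (z i)) (A i j)) (z j)))
    <->
    (exists p : 'I_n -> 'I_n -> quat R,
        (forall i j, qnorm (p i j) = beta i * beta j * qnorm (A i j)) /\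
        w = \sum_(i < n) \sum_(j < n) p i j).
Proof.
move=> upper _ tree _ beta_ge0 w; split.
  case=> z [z_unit ->]; eexists; split; last by [].
  move=> i j; rewrite !qnorm_mul qnorm_real qnorm_conj !z_unit mul1r mulr1.
  by rewrite ger0_norm // mulr_ge0.
(* factor p_ij = beta_i beta_j t_ij with |t_ij| = |a_ij|, then realise t *)
case=> p [p_norm ->].
have scaled i j : exists2 tij, qnorm tij = qnorm (A i j) &
    p i j = qmul (qreal (beta i * beta j)) tij.
  exact: qnorm_scaled (mulr_ge0 _ _) (p_norm i j).
have [t t_norm p_t] := fin_all_exists2 (fun i => fin_all_exists2 (scaled i)).
have [z z_unit z_t] := tree_unit_solution upper tree t_norm.
exists z; split=> //.
by apply: eq_bigr => i _; apply: eq_bigr => j _; rewrite z_t p_t.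
Qed.
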